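(* With $H$, $f$, $V$ (basis $v^{(1)},\dots,v^{(m)}$, coaction $\rho(v^{(i)})=\sum_{j=1}^m v^{(j)}\otimes\sum_{g\in G_f}a_{ji}^gp_g$) and the induced comodule $\tilde V$ as in the context, with $V$ simple, the irreducible character of $\tilde V$ is $$\chi(\tilde V)=\sum_{i=1}^m\sum_{z\in T_f}\sum_{g\in G_f}\tau(z^{-1},g;f)^{-1}\tau(z^{-1}gz,z^{-1};f)\,a_{ii}^g\,p_{z^{-1}gz}\#(z^{-1}\triangleright f).$$
   Context: Standing setup: $\Bbbk$ is an algebraically closed field of characteristic $0$, $F$ a group (possibly infinite), $G$ a finite group, and $(F,G,\triangleleft,\triangleright)$ a matched pair: $\triangleright:G\times F\to F$ a left action of $G$ on the set $F$, $\triangleleft:G\times F\to G$ a right action of $F$ on the set $G$, with $g\triangleright(ff')=(g\triangleright f)((g\triangleleft f)\triangleright f')$ and $(gg')\triangleleft f=(g\triangleleft(g'\triangleright f))(g'\triangleleft f)$. Maps $\sigma:G\times F\times F\to\Bbbk^\times$ and $\tau:G\times G\times F\to\Bbbk^\times$ satisfy: $\sigma(g;1_F,f)=\sigma(g;f,1_F)=\sigma(1_G;f,f')=1$; $\sigma(g\triangleleft f;f',f'')\sigma(g;f,f'f'')=\sigma(g;f,f')\sigma(g;ff',f'')$; $\tau(1_G,g;f)=\tau(g,1_G;f)=\tau(g,g';1_F)=1$; $\tau(g,g';g''\triangleright f)\tau(gg',g'';f)=\tau(g,g'g'';f)\tau(g',g'';f)$; and $\sigma(gg';f,f')\tau(g,g';ff')=\sigma(g;g'\triangleright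 f,(g'\triangleleft f)\triangleright f')\sigma(g';f,f')\tau(g,g';f)\tau(g\triangleleft(g'\triangleright f),g'\triangleleft f;f')$. $H=\Bbbk^G{}^\tau\#_\sigma\Bbbk F$ has basis $\{p_g\#f\}$, product $(p_g\#f)(p_{g'}\#f')=\delta_{g\triangleleft f,g'}\sigma(g;f,f')p_g\#ff'$, coproduct $\Delta(p_g\#f)=\sum_{x\in G}\tau(gx^{-1},x;f)\,p_{gx^{-1}}\#(x\triangleright f)\otimes p_x\#f$, counit $\varepsilon(p_g\#f)=\delta_{g,1_G}$. Fix $f\in F$; $G_f=\{g\in G\mid g\triangleright f=f\}$; $T_f$ a complete set of right coset representatives of $G_f$ in $G$ containing $1_G$. $\Bbbk^{G_f}_{\tau_f}$ is the coalgebra with basis $\{p_g\}_{g\in G_f}$, $\Delta(p_g)=\sum_{x\in G_f}\tau(gx^{-1},x;f)p_{gx^{-1}}\otimes p_x$, $\varepsilon(p_g)=\delta_{g,1_G}$. $H'_f$ is the coalgebra with basis $\{p_g\#f'\mid g\in G_f,f'\in F\}$, $\Delta(p_g\#f')=\sum_{x\in G_f}\tau(gx^{-1},x;f')p_{gx^{-1}}\#(x\triangleright f')\otimes p_x\#f'$; $H$ is a left $H'_f$-comodule via $(\pi_f\otimes\mathrm{id})\Delta$ ($\pi_f$ kills $p_g\#f'$, $g\notin G_f$). For a right $\Bbbk^{G_f}_{\tau_f}$-comodule $V$ with $\rho(v)=\sum_{g\in G_f}v_g\otimes p_g$, $V\otimes\Bbbk f$ is a right $H'_f$-comodule via $v\otimes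 f\mapsto\sum_g v_g\otimes f\otimes p_g\#f$, and the induced comodule $\tilde V=(V\otimes\Bbbk f)\Box_{H'_f}H$ (cotensor product) is a right $H$-comodule via $\mathrm{id}\otimes\Delta$. The character of a finite-dimensional right comodule $(M,\rho)$ with basis $m_1,\dots,m_n$ and dual basis $m_i^*$ is $\chi(M)=\sum_i(m_i^*\otimes\mathrm{id})\rho(m_i)\in H$. *)

From HB Require Import structures.
From mathcomp Require Import all_boot all_order all_algebra all_fingroup.

Set Implicit Arguments.
Unset Strict Implicit.
Unset Printing Implicit Defensive.

Import GRing.Theory.
Local Open Scope ring_scope.

Section MatchedPairHopf.

Variables (k : fieldType) (F : groupType) (G : finGroupType).
(* lact g f = g |> f  (left action of G on the set F)
   ract g f = g <| f  (right action of F on the set G) *)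
Variables (lact : G -> F -> F) (ract : G -> F -> G).

Definition matched_pair : Prop :=
  (forall f : F, lact 1%g f = f) /\
  (forall (g g' : G) (f : F), lact (g * g')%g f = lact g (lact g' f)) /\
  (forall g : G, ract g 1%g = g) /\
  (forall (g : G) (f f' : F), ract g (f * f')%g = ract (ract g f) f') /\
  (forall (g : G) (f f' : F),
      lact g (f * f')%g = (lact g f * lact (ract g f) f')%g) /\
  (forall (g g' : G) (f : F),
      ract (g * g')%g f = (ract g (lact g' f) * ract g' f)%g).

Variables (sigma : G -> F -> F -> k) (tau : G -> G -> F -> k).

Definition sigma_tau_conditions : Prop :=
  (forall g f f', sigma g f f' != 0) /\
  (forall g g' f, tau g g' f != 0) /\
  (forall g f, sigma g 1%g f = 1) /\
  (forall g f, sigma g f 1%g = 1) /\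
  (forall f f', sigma 1%g f f' = 1) /\
  (forall g f f' f'',
      sigma (ract g f) f' f'' * sigma g f (f' * f'')%g
      = sigma g f f' * sigma g (f * f')%g f'') /\
  (forall g f, tau 1%g g f = 1) /\
  (forall g f, tau g 1%g f = 1) /\
  (forall g g', tau g g' 1%g = 1) /\
  (forall g g' g'' f,
      tau g g' (lact g'' f) * tau (g * g')%g g'' f
      = tau g (g' * g'')%g f * tau g' g'' f) /\
  (forall g g' f f',
      sigma (g * g')%g f f' * tau g g' (f * f')%g
      = sigma g (lact g' f) (lact (ract g' f) f') * sigma g' f f'
        * tau g g' f * tau (ract g (lact g' f)) (ract g' f) f').

(* Elements of H = k^G{}^tau #_sigma kF are represented by their coordinate
   functions  h : G -> F -> k  in the basis {p_g # f}  (h g f = coefficient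
   of p_g # f), required to be finitely supported.  Elements of H (x) H are
   represented by coordinate functions G -> F -> G -> F -> k in the basis
   {(p_g1 # f1) (x) (p_g2 # f2)}. *)
Definition Hfinsupp (h : G -> F -> k) : Prop :=
  exists s : seq F, forall g f, h g f != 0 -> f \in s.

Definition pb (g : G) (f : F) : G -> F -> k :=
  fun x y => ((x == g) && (y == f))%:R.

(* Coproduct Delta(p_g # f') = sum_x tau(g x^-1, x; f') p_{g x^-1} # (x |> f')
   (x) p_x # f', extended linearly: coefficient of (p_g1 # f1) (x) (p_g2 # f2)
   in Delta h.  (In the linear extension the F-component f' of the source
   basis vector is the F-component of the right tensor factor, so the sum over
   f' collapses to f' = f2.) *)
Definition Hcoprod (h : G -> F -> k) : G -> F -> G -> F -> k :=
  fun g1 f1 g2 f2 =>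
    \sum_(g : G) \sum_(x : G)
      h g f2 * tau (g * x^-1)%g x f2
        * ((g * x^-1)%g == g1)%:R * (lact x f2 == f1)%:R * (x == g2)%:R.

Variable f : F.

Definition stab : {set G} := [set g : G | lact g f == f].

(* left H'_f-coaction on H:  lambda = (pi_f (x) id) Delta, where pi_f kills
   p_g # f' for g \notin G_f.  Coordinates in the basis
   {(p_g1 # f1) (x) (p_g2 # f2) : g1 \in G_f}. *)
Definition Hlcoact (h : G -> F -> k) : G -> F -> G -> F -> k :=
  fun g1 f1 g2 f2 => (g1 \in stab)%:R * Hcoprod h g1 f1 g2 f2.

Variables (m : nat) (a : 'I_m -> 'I_m -> G -> k).
(* V has basis v^(1..m) (indexed by 'I_m) and coaction
   rho(v^(i)) = sum_j v^(j) (x) sum_(g in G_f) a j i g  p_g  (a j i g = a_ji^g). *)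

(* V is a right comodule over the coalgebra k^{G_f}_{tau_f}:
   coassociativity and counit axioms, written in the bases. *)
Definition Vcomodule : Prop :=
  (forall i j g1 g2, g1 \in stab -> g2 \in stab ->
     \sum_(l < m) a j l g1 * a l i g2 = tau g1 g2 f * a j i (g1 * g2)%g) /\
  (forall i j, a j i 1%g = (i == j)%:R).

(* matrix of the map  w |-> (g-component of rho(w))  on row-coordinate
   vectors w of V *)
Definition coact_mx (g : G) : 'M[k]_m := \matrix_(i < m, j < m) a j i g.

(* V is a simple comodule: V <> 0 and its only subcomodules are 0 and V
   (a subspace W is a subcomodule iff rho(W) \subset W (x) k^{G_f}, i.e. W is
   stable under every coact_mx g, g \in G_f). *)
Definition Vsimple : Prop :=
  (0 < m)%N /\
  (forall W : 'M[k]_m,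
     (forall g, g \in stab -> stablemx W (coact_mx g)) ->
     (W == 0 :> 'M[k]_m) || row_full W).

(* Elements of (V (x) kf) (x) H are represented by coordinate functions
   w : 'I_m -> G -> F -> k,  w i g f' = coefficient of v^(i) (x) f (x) p_g # f'. *)
Definition VHfinsupp (w : 'I_m -> G -> F -> k) : Prop :=
  forall i, Hfinsupp (w i).

(* right H'_f-coaction on V (x) kf:
   v^(i) (x) f |-> sum_j v^(j) (x) f (x) sum_(g in G_f) a j i g  p_g # f;
   coefficient of v^(j) (x) f (x) p_g1 # f1 in the image of v^(i) (x) f. *)
Definition VFcoact (j i : 'I_m) (g1 : G) (f1 : F) : k :=
  (g1 \in stab)%:R * (f1 == f)%:R * a j i g1.

(* membership in the cotensor product (V (x) kf) \Box_{H'_f} H: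
   (rho_{V (x) kf} (x) id) w = (id (x) lambda) w, compared coordinatewise in
   (V (x) kf) (x) H'_f (x) H. *)
Definition in_cotensor (w : 'I_m -> G -> F -> k) : Prop :=
  forall (j : 'I_m) (g1 : G) (f1 : F) (g2 : G) (f2 : F),
    \sum_(i < m) VFcoact j i g1 f1 * w i g2 f2 = Hlcoact (w j) g1 f1 g2 f2.

(* b_1, ..., b_n is a basis of the induced comodule
   Vt = (V (x) kf) \Box_{H'_f} H. *)
Definition induced_basis (n : nat) (b : 'I_n -> 'I_m -> G -> F -> k) : Prop :=
  (forall l, VHfinsupp (b l) /\ in_cotensor (b l)) /\
  (forall c : 'I_n -> k,
     (forall i g f', \sum_(l < n) c l * b l i g f' = 0) -> forall l, c l = 0) /\
  (forall w, VHfinsupp w -> in_cotensor w ->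
     exists c : 'I_n -> k,
       forall i g f', w i g f' = \sum_(l < n) c l * b l i g f').

(* the coaction id (x) Delta of Vt, written in the basis b:
   (id (x) Delta)(b_l) = sum_j b_j (x) c j l,  with c j l \in H.
   Then c j l = (b_j^* (x) id) rho(b_l), so the character of Vt is
   chi(Vt) = sum_l c l l. *)
Definition induced_coaction_coeffs (n : nat) (b : 'I_n -> 'I_m -> G -> F -> k)
    (c : 'I_n -> 'I_n -> G -> F -> k) : Prop :=
  (forall j l, Hfinsupp (c j l)) /\
  (forall l i g1 f1 g2 f2,
     Hcoprod (b l i) g1 f1 g2 f2 = \sum_(j < n) b j i g1 f1 * c j l g2 f2).

Definition character_from (n : nat) (c : 'I_n -> 'I_n -> G -> F -> k) :
    G -> F -> k :=
  fun g f' => \sum_(l < n) c l l g f'.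

Definition prop52_rhs (T : {set G}) : G -> F -> k :=
  fun g' f' =>
    \sum_(i < m) \sum_(z in T) \sum_(g in stab)
      (tau z^-1 g f)^-1 * tau (z^-1 * g * z)%g z^-1 f * a i i g
        * pb (z^-1 * g * z)%g (lact z^-1 f) g' f'.

End MatchedPairHopf.

From HB Require Import structures.
From mathcomp Require Import all_boot all_order all_algebra all_fingroup.
From mathcomp Require Import ring.

(* The cotensor condition forces an element w of (V (x) kf) \Box_{H'_f} H to vanish at
   (g, x) unless g |> x = f, and, through the comodule structure of V, it ties the value
   of w at (h z, z^-1 |> f), h \in G_f, to its value at (z, z^-1 |> f).  Hence w is
   determined by its values at the points (z, z^-1 |> f), z \in T_f, and these can be
   prescribed freely: this gives an explicit basis of the induced comodule indexed by
   (basis of V) x T_f, with dual coordinate functionals.  The character is the trace of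
   the coaction, so it can be computed in that basis, and the cocycle identity for tau
   turns the diagonal coefficients into the stated ones.  Simplicity of V, characteristic
   0 and 1 \in T_f only matter for the irreducibility of the character, not for the
   formula. *)

Set Implicit Arguments.
Unset Strict Implicit.
Unset Printing Implicit Defensive.

Import GRing.Theory.
Local Open Scope ring_scope.

Section InducedComodule.

Variables (k : fieldType) (F : groupType) (G : finGroupType).
Variables (lact : G -> F -> F) (tau : G -> G -> F -> k) (f : F).

Hypothesis lact1 : forall x : F, lact 1%g x = x.
Hypothesis lactM : forall (g g' : G) (x : F), lact (g * g')%g x = lact g (lact g' x).
Hypothesis tau_neq0 : forall g g' x, tau g g' x != 0.
Hypothesis tau1g : forall g x, tau 1%g g x = 1.
Hypothesis taug1 : forall g x, tau g 1%g x = 1.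
Hypothesis tau_cocycle : forall g g' g'' x,
  tau g g' (lact g'' x) * tau (g * g')%g g'' x = tau g (g' * g'')%g x * tau g' g'' x.

Local Notation stab := (stab lact f).

Lemma lactK (z : G) (x : F) : lact z^-1 (lact z x) = x.
Proof. by rewrite -lactM mulVg lact1. Qed.

Lemma lactVK (z : G) (x : F) : lact z (lact z^-1 x) = x.
Proof. by rewrite -lactM mulgV lact1. Qed.

Lemma stab_group_set : group_set stab.
Proof.
apply/group_setP; split=> [|x y]; first by rewrite inE lact1.
by rewrite !inE lactM => /eqP fx /eqP ->; rewrite fx.
Qed.

Canonical stab_group := Group stab_group_set.

Lemma HcoprodE (h : G -> F -> k) g1 f1 g2 f2 :
  Hcoprod lact tau h g1 f1 g2 f2 =
  h (g1 * g2)%g f2 * tau g1 g2 f2 * (lact g2 f2 == f1)%:R.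
Proof.
rewrite /Hcoprod (bigD1 (g1 * g2)%g) //= [X in _ + X]big1 => [|g ne_g]; last first.
  apply: big1 => x _; have [->|] := eqVneq x g2; last by rewrite mulr0.
  have [def_g1|] := eqVneq (g * g2^-1)%g g1; last by rewrite !(mulr0, mul0r).
  by rewrite -def_g1 mulgKV eqxx in ne_g.
rewrite addr0 (bigD1 g2) //= big1 ?addr0 => [|x /negbTE->]; last by rewrite mulr0.
by rewrite mulgK !eqxx !mulr1.
Qed.

Lemma Hcoprod_sum n (h : G -> F -> k) (d : 'I_n -> k) (v : 'I_n -> G -> F -> k) :
    (forall g x, h g x = \sum_(l < n) d l * v l g x) ->
  forall g1 f1 g2 f2,
    Hcoprod lact tau h g1 f1 g2 f2 = \sum_(l < n) d l * Hcoprod lact tau (v l) g1 f1 g2 f2.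
Proof.
move=> def_h g1 f1 g2 f2; rewrite HcoprodE def_h !big_distrl /=.
by apply: eq_bigr => l _; rewrite HcoprodE !mulrA.
Qed.

Variables (T : {set G}) (m : nat) (a : 'I_m -> 'I_m -> G -> k).
Hypothesis T_transversal : is_transversal T (rcosets stab [set: G]) [set: G].
Hypothesis a_coassoc : forall i j g1 g2, g1 \in stab -> g2 \in stab ->
  \sum_(l < m) a j l g1 * a l i g2 = tau g1 g2 f * a j i (g1 * g2)%g.
Hypothesis a_counit : forall i j, a j i 1%g = (i == j)%:R.

Lemma transversal_stab_rep (g : G) :
  exists2 z0, z0 \in T & forall z, z \in T -> ((g * z^-1)%g \in stab) = (z == z0).
Proof.
case/and3P: T_transversal => _ _ /forall_inP/(_ _ (imset_f _ (in_setT g))).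
rewrite rcosetE => /cards1P[z0 T_z0].
have : z0 \in T :&: (stab :* g)%g by rewrite T_z0 set11.
rewrite inE => /andP[Tz0 _]; exists z0 => // z Tz.
rewrite -groupV invMg invgK -mem_rcoset.
by rewrite -[z \in _]andTb -Tz -in_setI T_z0 in_set1.
Qed.

Local Notation vec := ('I_m -> G -> F -> k).
Local Notation in_cotensor := (in_cotensor lact tau f a).

Lemma cotensor_supp (w : vec) j g x :
  in_cotensor w -> w j g x != 0 -> lact g x = f.
Proof.
move=> w_cot; apply: contraNeq => gx_neq_f; apply/eqP.
have := w_cot j 1%g (lact g x) g x.
rewrite /VFcoact /Hlcoact HcoprodE group1 mul1g tau1g eqxx big1 => [|i _].
  by rewrite !mulr1 mul1r.
by rewrite (negbTE gx_neq_f) !(mulr0, mul0r).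
Qed.

Lemma cotensor_stab_mul (w : vec) j (h g : G) x : in_cotensor w ->
  h \in stab -> lact g x = f ->
  \sum_(i < m) a j i h * w i g x = w j (h * g)%g x * tau h g x.
Proof.
move=> w_cot stab_h gx_f; have := w_cot j h f g x.
rewrite /VFcoact /Hlcoact HcoprodE stab_h gx_f eqxx !mul1r mulr1 => <-.
by apply: eq_bigr => i _; rewrite !mul1r.
Qed.

Definition Tpairs : {set 'I_m * G} := [set p | p.2 \in T].

Lemma sum_Tpairs (h : 'I_m * G -> k) :
  \sum_(p in Tpairs) h p = \sum_(l < m) \sum_(z in T) h (l, z).
Proof. by rewrite pair_big_dep; apply: eq_big => -[l z] //; rewrite inE. Qed.

Definition coord (p : 'I_m * G) (w : vec) : k := w p.1 p.2 (lact p.2^-1 f).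

Definition ebasis (p : 'I_m * G) : vec := fun j g x =>
  (x == lact p.2^-1 f)%:R * ((g * p.2^-1)%g \in stab)%:R
  * (tau (g * p.2^-1)%g p.2 (lact p.2^-1 f))^-1 * a j p.1 (g * p.2^-1)%g.

Lemma cotensor_expand (w : vec) j g x : in_cotensor w ->
  w j g x = \sum_(p in Tpairs) coord p w * ebasis p j g x.
Proof.
move=> w_cot; rewrite sum_Tpairs.
have [gx_f|gx_neq_f] := eqVneq (lact g x) f; last first.
  rewrite (_ : w j g x = 0); last first.
    by apply: contraNeq gx_neq_f => /(cotensor_supp w_cot) ->.
  symmetry; apply: big1 => l _; apply: big1 => z _; rewrite /ebasis /=.
  have [def_x|] := eqVneq x (lact z^-1 f); last by rewrite !(mulr0, mul0r).
  have [|_] := boolP ((g * z^-1)%g \in stab); last by rewrite !(mulr0, mul0r).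
  rewrite inE => /eqP gz_f.
  by rewrite def_x -lactM gz_f eqxx in gx_neq_f.
have [z0 Tz0 rep_z0] := transversal_stab_rep g.
rewrite exchange_big (bigD1 z0) //= [X in _ + X]big1 ?addr0 => [|z /andP[Tz ne_z]].
  have stab_h : (g * z0^-1)%g \in stab by rewrite rep_z0.
  have def_x : x = lact z0^-1 f.
    rewrite -[x](lactK z0) -[z0 in lact z0 x](mulKg (g * z0^-1)%g) mulgKV lactM gx_f.
    by move: stab_h; rewrite -groupV inE => /eqP->.
  have := cotensor_stab_mul j w_cot stab_h (lactVK z0 f); rewrite mulgKV -def_x => wE.
  rewrite /ebasis /coord /= -def_x eqxx stab_h !mul1r.
  apply: (mulIf (tau_neq0 (g * z0^-1) z0 x)); rewrite -wE big_distrl /=.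
  by apply: eq_bigr => l _; field; rewrite tau_neq0.
by apply: big1 => l _; rewrite /ebasis /= rep_z0 // (negbTE ne_z) !(mulr0, mul0r).
Qed.

Lemma ebasis_finsupp p i : Hfinsupp (ebasis p i).
Proof.
exists [:: lact p.2^-1 f] => g x; rewrite /ebasis mem_seq1.
by have [|] := eqVneq x (lact p.2^-1 f); rewrite ?mul0r ?eqxx.
Qed.

Lemma ebasis_cotensor p : in_cotensor (ebasis p).
Proof.
case: p => l z j g1 f1 g2 f2; rewrite /VFcoact /Hlcoact HcoprodE /ebasis /=.
have [stab_g1|_] := boolP (g1 \in stab); last first.
  by rewrite big1 ?mul0r // => i _; rewrite !mul0r.
have [->|_] := eqVneq f2 (lact z^-1 f); last first.
  by rewrite big1 ?(mulr0, mul0r) // => i _; rewrite !(mulr0, mul0r).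
rewrite -mulgA (groupMl _ stab_g1).
have [stab_h|_] := boolP ((g2 * z^-1)%g \in stab); last first.
  by rewrite big1 ?(mulr0, mul0r) // => i _; rewrite !(mulr0, mul0r).
have g2x_f : lact g2 (lact z^-1 f) = f.
  by move: stab_h; rewrite inE lactM => /eqP.
have cocycle := tau_cocycle g1 (g2 * z^-1) z (lact z^-1 f).
rewrite lactVK mulgKV in cocycle.
have tauE : tau g1 (g2 * z^-1) f = tau g1 g2 (lact z^-1 f) * tau (g2 * z^-1) z (lact z^-1 f)
    / tau (g1 * (g2 * z^-1)) z (lact z^-1 f).
  by rewrite -cocycle mulfK.
rewrite g2x_f eq_sym.
transitivity ((f == f1)%:R * (tau (g2 * z^-1) z (lact z^-1 f))^-1
              * \sum_(i < m) a j i g1 * a i l (g2 * z^-1)%g).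
  by rewrite big_distrr /=; apply: eq_bigr => i _; ring.
rewrite a_coassoc // tauE /= mulr1n; set delta := (f == f1)%:R.
by field; rewrite !tau_neq0.
Qed.

Lemma coord_ebasis p q : p \in Tpairs -> q \in Tpairs ->
  coord q (ebasis p) = (p == q)%:R.
Proof.
case: p q => [l z] [l' z']; rewrite !inE /= => Tz Tz'; rewrite /coord /ebasis /=.
have [<-|ne_z] := eqVneq z z'.
  by rewrite xpair_eqE mulgV group1 !eqxx tau1g invr1 !mul1r a_counit andbT.
have [z0 _ rep_z0] := transversal_stab_rep z'.
have -> : ((z' * z^-1)%g \in stab) = false.
  rewrite rep_z0 //; apply: contraNF ne_z => /eqP->.
  by rewrite eq_sym -rep_z0 // mulgV group1.
by rewrite xpair_eqE (negbTE ne_z) andbF !(mulr0, mul0r).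
Qed.

Definition coact_at (g2 : G) (f2 : F) (w : vec) : vec :=
  fun i g1 f1 => Hcoprod lact tau (w i) g1 f1 g2 f2.

Lemma coact_at_cotensor g2 f2 (w : vec) : in_cotensor w -> in_cotensor (coact_at g2 f2 w).
Proof.
move=> w_cot j h f1' g1 f1; rewrite /VFcoact /Hlcoact /coact_at !HcoprodE.
under eq_bigr do rewrite HcoprodE.
have [stab_h|_] := boolP (h \in stab); last first.
  by rewrite big1 ?mul0r // => i _; rewrite !mul0r.
have [<-|_] := eqVneq (lact g2 f2) f1; last first.
  by rewrite big1 ?(mulr0, mul0r) // => i _; rewrite !(mulr0, mul0r).
rewrite -lactM.
have [gf|gf_neq] := eqVneq (lact (g1 * g2)%g f2) f.
  rewrite gf /= mulr1n.
  transitivity ((f1' == f)%:R * tau g1 g2 f2 * \sum_(i < m) a j i h * w i (g1 * g2)%g f2).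
    by rewrite big_distrr /=; apply: eq_bigr => i _; ring.
  rewrite (cotensor_stab_mul _ w_cot stab_h gf) mulgA eq_sym.
  transitivity ((f == f1')%:R * w j (h * g1 * g2)%g f2 * (tau h (g1 * g2) f2 * tau g1 g2 f2)).
    by ring.
  by rewrite -tau_cocycle; ring.
have w_out i (g : G) : lact g f2 != f -> w i g f2 = 0.
  by apply: contraNeq => /(cotensor_supp w_cot)/eqP.
rewrite big1 => [|i _]; last by rewrite w_out // !(mulr0, mul0r).
rewrite w_out ?(mulr0, mul0r) // -mulgA lactM; apply: contra gf_neq => /eqP hgf.
by rewrite -(lactK h (lact _ f2)) hgf; move: stab_h; rewrite -groupV inE.
Qed.

Lemma tau_conj (g z : G) : g \in stab ->
  (tau g z (lact z^-1 f))^-1 * tau z (z^-1 * g * z) (lact z^-1 f)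
  = (tau z^-1 g f)^-1 * tau (z^-1 * g * z) z^-1 f.
Proof.
rewrite inE => /eqP gf.
have conjM : (z * (z^-1 * g * z))%g = (g * z)%g by rewrite !mulgA mulgV mul1g.
have conjMV : (z^-1 * g * z * z^-1)%g = (z^-1 * g)%g by rewrite mulgK.
have := tau_cocycle z (z^-1 * g * z) z^-1 f; rewrite conjM conjMV => cocycle1.
have := tau_cocycle z z^-1 g f; rewrite gf mulgV tau1g mulr1 => cocycle2.
have := tau_cocycle g z z^-1 f; rewrite mulgV taug1 mul1r => cocycle3.
have tau_zw : tau z (z^-1 * g * z) (lact z^-1 f) =
   tau z (z^-1 * g) f * tau (z^-1 * g * z) z^-1 f / tau (g * z) z^-1 f.
  by rewrite -cocycle1 mulfK.
have tau_gz : tau g z (lact z^-1 f) =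
   tau z (z^-1 * g) f * tau z^-1 g f / tau (g * z) z^-1 f.
  by rewrite -cocycle2 -cocycle3 mulfK.
by rewrite tau_zw tau_gz; field; rewrite !tau_neq0.
Qed.

Lemma coord_coact_ebasis l z g2 f2 :
  coord (l, z) (coact_at g2 f2 (ebasis (l, z))) =
  \sum_(g in stab) (tau z^-1 g f)^-1 * tau (z^-1 * g * z)%g z^-1 f * a l l g
    * pb k (z^-1 * g * z)%g (lact z^-1 f) g2 f2.
Proof.
rewrite /coord /coact_at HcoprodE /ebasis /pb /=.
set g0 := (z * g2 * z^-1)%g.
have g2E : g2 = (z^-1 * g0 * z)%g by rewrite /g0 !mulgA mulVg mul1g mulgKV.
clearbody g0.
have conj_eq g : (g2 == z^-1 * g * z)%g = (g == g0).
  by rewrite g2E; apply/eqP/eqP => [/mulIg/mulgI|->].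
under eq_bigr do rewrite conj_eq.
have [stab_g0|nstab_g0] := boolP (g0 \in stab); last first.
  rewrite !(mulr0, mul0r) big1 // => g stab_g.
  by rewrite (_ : g == g0 = false) ?mulr0 //; apply: contraNF nstab_g0 => /eqP <-.
rewrite (bigD1 g0) //= eqxx big1 ?addr0 => [|g /andP[_ /negbTE->]]; last by rewrite mulr0.
have [->|_] := eqVneq f2 (lact z^-1 f); last by rewrite !(mulr0, mul0r).
have g2x : lact g2 (lact z^-1 f) = lact z^-1 f.
  by rewrite g2E !lactM lactVK; move: stab_g0; rewrite inE => /eqP->.
rewrite g2x eqxx /= !mulr1n !mulr1 !mul1r.
transitivity (a l l g0 * ((tau g0 z (lact z^-1 f))^-1 * tau z g2 (lact z^-1 f))); first by ring.
by rewrite g2E tau_conj //; ring.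
Qed.

Definition induced_ebasis (j : 'I_#|Tpairs|) : vec := ebasis (enum_val j).

Definition induced_coeff (j l : 'I_#|Tpairs|) : G -> F -> k :=
  fun g2 f2 => coord (enum_val j) (coact_at g2 f2 (induced_ebasis l)).

Lemma cotensor_expand_enum (w : vec) i g x : in_cotensor w ->
  w i g x = \sum_(j < #|Tpairs|) coord (enum_val j) w * induced_ebasis j i g x.
Proof. by move=> w_cot; rewrite (cotensor_expand i g x w_cot) big_enum_val. Qed.

Lemma induced_ebasis_basis : induced_basis lact tau f a induced_ebasis.
Proof.
split; [|split] => [j | d d_rel j | w _ w_cot].
- by split=> [i|]; [exact: ebasis_finsupp | exact: ebasis_cotensor].
- have T_enum (j' : 'I_#|Tpairs|) : enum_val j' \in Tpairs by exact: enum_valP.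
  have := d_rel (enum_val j).1 (enum_val j).2 (lact (enum_val j).2^-1 f).
  under eq_bigr => l _ do rewrite -/(coord (enum_val j) _) coord_ebasis // (inj_eq enum_val_inj).
  by rewrite (bigD1 j) //= eqxx mulr1 big1 ?addr0 // => l /negbTE->; rewrite mulr0.
- by exists (fun j => coord (enum_val j) w) => i g x; apply: cotensor_expand_enum.
Qed.

Lemma induced_coeff_coaction :
  induced_coaction_coeffs lact tau induced_ebasis induced_coeff.
Proof.
split=> [j l | l i g1 f1 g2 f2].
  exists [seq lact y f | y <- enum G] => g2 f2.
  rewrite /induced_coeff /coord /coact_at HcoprodE => coeff_neq0.
  have : lact ((enum_val j).2 * g2)%g f2 = f.
    apply: (@cotensor_supp (induced_ebasis l) (enum_val j).1); first exact: ebasis_cotensor.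
    by apply: contraNneq coeff_neq0 => ->; rewrite !mul0r.
  move=> gf2_f; apply/mapP; exists (((enum_val j).2 * g2)^-1)%g; first by rewrite mem_enum.
  by rewrite -gf2_f lactK.
rewrite -[LHS]/(coact_at g2 f2 (induced_ebasis l) i g1 f1).
rewrite (cotensor_expand_enum i g1 f1 (coact_at_cotensor g2 f2 (ebasis_cotensor _))).
by apply: eq_bigr => j _; rewrite mulrC.
Qed.

(* The character is the trace of the coaction, computed in the basis [ebasis] instead:
   [D] expresses [ebasis] in [b], [P] is [coord] on [b], and [D P = 1]. *)
Lemma character_from_ebasis n (b : 'I_n -> vec) (c : 'I_n -> 'I_n -> G -> F -> k) g2 f2 :
  induced_basis lact tau f a b -> induced_coaction_coeffs lact tau b c ->
  character_from c g2 f2 = \sum_(p in Tpairs) coord p (coact_at g2 f2 (ebasis p)).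
Proof.
move=> [b_cot [b_free b_span]] [_ b_coact].
have ebasis_span j : exists d : 'I_n -> k,
    forall i g x, induced_ebasis j i g x = \sum_(l < n) d l * b l i g x.
  by apply: b_span => [i|]; [exact: ebasis_finsupp | exact: ebasis_cotensor].
have [D ebasisE] := fin_all_exists ebasis_span.
pose P : 'M[k]_(#|Tpairs|, n) := \matrix_(j, l) coord (enum_val j) (b l).
pose C : 'M[k]_n := \matrix_(l, l') c l l' g2 f2.
pose Dm : 'M[k]_(n, #|Tpairs|) := \matrix_(l, j) D j l.
have DmP : Dm *m P = 1%:M.
  apply/matrixP => l l'; apply/eqP; rewrite -subr_eq0; apply/eqP; move: l.
  apply: b_free => i g x; rewrite (eq_bigr _ (fun l _ => mulrBl _ _ _)) sumrB.
  apply/eqP; rewrite subr_eq0; apply/eqP.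
  transitivity (b l' i g x).
    rewrite (cotensor_expand_enum i g x (b_cot l').2).
    under [RHS]eq_bigr do rewrite ebasisE big_distrr.
    rewrite exchange_big; apply: eq_bigr => l _; rewrite !mxE big_distrl.
    by apply: eq_bigr => j _; rewrite /Dm /P !mxE /=; ring.
  rewrite (bigD1 l') //= mxE eqxx mul1r big1 ?addr0 // => l.
  by rewrite mxE eq_sym => /negbTE->; rewrite mul0r.
have -> : character_from c g2 f2 = \tr (P *m C *m Dm).
  rewrite mxtrace_mulC mulmxA DmP mul1mx.
  by apply: eq_bigr => l _; rewrite mxE.
rewrite big_enum_val; apply: eq_bigr => j _.
rewrite /coord /coact_at (Hcoprod_sum (v := fun l => b l (enum_val j).1) (ebasisE j _)).
rewrite !mxE; apply: eq_bigr => l _.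
rewrite b_coact mxE big_distrl big_distrr /=; apply: eq_bigr => l' _.
by rewrite /P /C /Dm !mxE /coord; ring.
Qed.

Lemma induced_character n (b : 'I_n -> vec) (c : 'I_n -> 'I_n -> G -> F -> k) g2 f2 :
  induced_basis lact tau f a b -> induced_coaction_coeffs lact tau b c ->
  character_from c g2 f2 = prop52_rhs lact tau f a T g2 f2.
Proof.
move=> b_basis b_coact; rewrite (character_from_ebasis _ _ b_basis b_coact) sum_Tpairs.
by apply: eq_bigr => l _; apply: eq_bigr => z _; rewrite coord_coact_ebasis.
Qed.

End InducedComodule.

Theorem proposition5p2
  (k : closedFieldType) (k_char0 : [pchar k] =i pred0)
  (F : groupType) (G : finGroupType)
  (lact : G -> F -> F) (ract : G -> F -> G)
  (mp : matched_pair lact ract)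
  (sigma : G -> F -> F -> k) (tau : G -> G -> F -> k)
  (st : sigma_tau_conditions lact ract sigma tau)
  (f : F) (T : {set G})
  (T1 : 1%g \in T)
  (Ttrans : is_transversal T (rcosets (stab lact f) [set: G]) [set: G])
  (m : nat) (a : 'I_m -> 'I_m -> G -> k)
  (Vcom : Vcomodule lact tau f a)
  (Vsim : Vsimple lact f a) :
  (exists (n : nat) (b : 'I_n -> 'I_m -> G -> F -> k)
          (c : 'I_n -> 'I_n -> G -> F -> k),
      induced_basis lact tau f a b /\ induced_coaction_coeffs lact tau b c) /\
  (forall (n : nat) (b : 'I_n -> 'I_m -> G -> F -> k)
          (c : 'I_n -> 'I_n -> G -> F -> k),
      induced_basis lact tau f a b -> induced_coaction_coeffs lact tau b c ->
      forall (g : G) (f' : F),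
        character_from c g f' = prop52_rhs lact tau f a T g f').
Proof.
case: mp => lact1 [lactM _].
case: st => _ [tau_neq0 [_ [_ [_ [_ [tau1g [taug1 [_ [tau_cocycle _]]]]]]]]].
case: Vcom => a_coassoc a_counit.
split=> [|n b c b_basis b_coact g f'].
  eexists _, _, _.
  by split; [apply: induced_ebasis_basis | apply: induced_coeff_coaction]; eassumption.
by apply: induced_character; eassumption.
Qed.
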